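(* Let $(\mathcal{S},\mathcal{A},\tau,\mu_0,\gamma)$ be fixed, and let $\pi$ be any fixed policy. For reward functions $R, R' : \mathcal{S}\times\mathcal{A}\times\mathcal{S}\to\mathbb{R}$, let $Q^\pi_R$ and $Q^\pi_{R'}$ be the $Q$-functions of $\pi$ in the MDPs $(\mathcal{S},\mathcal{A},\tau,\mu_0,R,\gamma)$ and $(\mathcal{S},\mathcal{A},\tau,\mu_0,R',\gamma)$. Then $Q^\pi_R = Q^\pi_{R'}$ if and only if $R'$ is produced from $R$ by $S'$-redistribution. Likewise, the optimal $Q$-functions satisfy $Q^\star_R = Q^\star_{R'}$ if and only if $R'$ is produced from $R$ by $S'$-redistribution.
   Context: An MDP is a tuple $(\mathcal{S},\mathcal{A},\tau,\mu_0,R,\gamma)$ with finite state set $\mathcal{S}$, finite action set $\mathcal{A}$, transition dynamics $\tau:\mathcal{S}\times\mathcal{A}\to\Delta(\mathcal{S})$, initial state distribution $\mu_0\in\Delta(\mathcal{S})$, deterministic reward function $R:\mathcal{S}\times\mathcal{A}\times\mathcal{S}\to\mathbb{R}$, and discount $\gamma\in(0,1)$. A policy is a map $\pi:\mathcal{S}\to\Delta(\mathcal{A})$. The return of a trajectory $(s_0,a_0,s_1,a_1,\dots)$ is $\sum_{t\ge 0}\gamma^t R(s_t,a_t,s_{t+1})$. The value function is $V^\pi(s)=\mathbb{E}[\text{return}]$ of the trajectory started at $s$ with actions drawn from $\pi$ and next states from $\tau$; the $Q$-function $Q^\pi(s,a)$ is the same expectation conditioned on the first action being $a$; equivalently $Q^\pi$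 is the unique solution of $Q^\pi(s,a)=\mathbb{E}_{S'\sim\tau(s,a)}[R(s,a,S')+\gamma V^\pi(S')]$, $V^\pi(s)=\mathbb{E}_{A\sim\pi(s)}[Q^\pi(s,A)]$. The policy evaluation function is $\mathcal{J}(\pi)=\mathbb{E}_{S_0\sim\mu_0}[V^\pi(S_0)]$; an optimal policy maximises $\mathcal{J}$, and $Q^\star$ denotes the (unique) $Q$-function of an optimal policy. Given $\tau$, $R'$ is produced from $R$ by $S'$-redistribution if $\mathbb{E}_{S'\sim\tau(s,a)}[R(s,a,S')]=\mathbb{E}_{S'\sim\tau(s,a)}[R'(s,a,S')]$ for all $s\in\mathcal{S}$, $a\in\mathcal{A}$. *)

From HB Require Import structures.
From mathcomp Require Import all_boot all_order all_algebra.
From mathcomp Require Import all_classical all_reals all_analysis.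
Set Implicit Arguments. Unset Strict Implicit. Unset Printing Implicit Defensive.
Import Order.TTheory GRing.Theory Num.Theory numFieldNormedType.Exports.
Local Open Scope ring_scope.

Section MDP.
Variables (R : realType) (S A : finType).

Definition is_dist (T : finType) (p : T -> R) : Prop :=
  (forall x, 0 <= p x) /\ \sum_(x : T) p x = 1.

Definition is_policy (pi : S -> A -> R) : Prop := forall s, is_dist (pi s).

Variables (tau : S -> A -> S -> R) (gamma : R).

(* joint distribution of (s_t, a_t) given s_0 = s, a_0 = a, following pi *)
Fixpoint sa_dist (pi : S -> A -> R) (s : S) (a : A) (t : nat) : S -> A -> R :=
  match t with
  | 0%N => fun s1 a1 => if (s1 == s) && (a1 == a) then 1 else 0
  | t'.+1 => fun s2 a2 =>
      \sum_(s1 : S) \sum_(a1 : A)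
        sa_dist pi s a t' s1 a1 * tau s1 a1 s2 * pi s2 a2
  end.

Definition exp_reward (pi : S -> A -> R) (r : S -> A -> S -> R)
    (s : S) (a : A) (t : nat) : R :=
  \sum_(s1 : S) \sum_(a1 : A) \sum_(s2 : S)
    sa_dist pi s a t s1 a1 * tau s1 a1 s2 * r s1 a1 s2.

Definition Qpi (pi : S -> A -> R) (r : S -> A -> S -> R) : S -> A -> R :=
  fun s a => limn (series ((fun t => gamma ^+ t * exp_reward pi r s a t) : R^nat)).

Definition Qstar (r : S -> A -> S -> R) : S -> A -> R :=
  fun s a => sup [set q | exists pi, is_policy pi /\ q = Qpi pi r s a]%classic.

Definition S'_redistribution (r r' : S -> A -> S -> R) : Prop :=
  forall s a, \sum_(s2 : S) tau s a s2 * r s a s2 = \sum_(s2 : S) tau s a s2 * r' s a s2.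

End MDP.

From HB Require Import structures.
From mathcomp Require Import all_boot all_order all_algebra.
From mathcomp Require Import all_classical all_reals all_analysis.
From mathcomp Require Import lra.
Set Implicit Arguments. Unset Strict Implicit. Unset Printing Implicit Defensive.
Import Order.TTheory GRing.Theory Num.Theory numFieldNormedType.Exports.
Local Open Scope classical_set_scope.
Local Open Scope ring_scope.

(* Q^pi_r depends on r only through the mean reward rbar(s,a) = E_{s' ~ tau(s,a)} r(s,a,s'),
   and the Bellman equation Q^pi = rbar + gamma P^pi Q^pi recovers rbar from Q^pi.
   For Q*, a deterministic policy d maximising sum_s Q^d(s, d s) is greedy for its own
   Q-function (otherwise policy improvement would increase the sum), hence dominates every
   policy by the discounted maximum principle.  So Q* = Q^d satisfies the optimality equation
   Q*(s,a) = rbar(s,a) + gamma E_{s'} max_a' Q*(s',a'), which again recovers rbar from Q*. *)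

Lemma sumr_mul_sumC (R : comPzSemiRingType) (I J : Type) (rI : seq I) (rJ : seq J)
    (w : I -> R) (c : J -> R) (f : J -> I -> R) :
  \sum_(i <- rI) w i * \sum_(j <- rJ) c j * f j i =
  \sum_(j <- rJ) c j * \sum_(i <- rI) w i * f j i.
Proof.
under eq_bigr do rewrite big_distrr /=.
rewrite exchange_big; apply: eq_bigr => j _; rewrite big_distrr.
by apply: eq_bigr => i _; rewrite mulrCA.
Qed.

Section TransitionOperator.
Variables (R : realType) (S A : finType) (tau : S -> A -> S -> R).
Implicit Types (pi : S -> A -> R) (q : S -> A -> R).

Definition pol_mean pi q (s : S) : R := \sum_a pi s a * q s a.

Definition Ppi pi q : S -> A -> R := fun s a => \sum_s2 tau s a s2 * pol_mean pi q s2.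

Definition mean_reward (r : S -> A -> S -> R) : S -> A -> R :=
  fun s a => \sum_s2 tau s a s2 * r s a s2.

Lemma S'_redistributionE r r' :
  S'_redistribution tau r r' <-> mean_reward r = mean_reward r'.
Proof.
split=> [h|h s a]; first by apply/funext=> s; apply/funext=> a; exact: h.
exact: (congr1 (fun q => q s a) h).
Qed.

Lemma sa_dist_mean pi q t s a :
  \sum_s1 \sum_a1 sa_dist tau pi s a t s1 a1 * q s1 a1 = iter t (Ppi pi) q s a.
Proof.
elim: t q => [|t IHt] q.
  rewrite /= (bigD1 s) //= (bigD1 a) //= !eqxx mul1r !big1 ?addr0 //.
    by move=> s1 /negbTE hs1; rewrite big1 // => a1 _; rewrite hs1 mul0r.
  by move=> a1 /negbTE ->; rewrite andbF mul0r.
rewrite iterSr -IHt /= /Ppi /pol_mean.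
transitivity (\sum_s1 \sum_a1 \sum_s2 \sum_a2
    sa_dist tau pi s a t s1 a1 * tau s1 a1 s2 * pi s2 a2 * q s2 a2); last first.
  apply: eq_bigr => s1 _; apply: eq_bigr => a1 _; rewrite big_distrr /=.
  apply: eq_bigr => s2 _; rewrite mulrA big_distrr /=.
  by apply: eq_bigr => a2 _; rewrite !mulrA.
under eq_bigr do under eq_bigr do rewrite big_distrl /=.
under eq_bigr do under eq_bigr do under eq_bigr do rewrite big_distrl /=.
under eq_bigr do rewrite exchange_big /=.
under eq_bigr do under eq_bigr do rewrite exchange_big /=.
rewrite [LHS]exchange_big /=.
by under eq_bigr do rewrite exchange_big /=.
Qed.

Lemma exp_reward_iter pi r s a t :
  exp_reward tau pi r s a t = iter t (Ppi pi) (mean_reward r) s a.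
Proof.
rewrite -sa_dist_mean; apply: eq_bigr => s1 _; apply: eq_bigr => a1 _.
by rewrite /mean_reward big_distrr; apply: eq_bigr => s2 _; rewrite /= mulrA.
Qed.

Lemma pol_mean_sum pi (I : Type) (r : seq I) (c : I -> R) (q : I -> S -> A -> R) s :
  pol_mean pi (fun s a => \sum_(k <- r) c k * q k s a) s =
  \sum_(k <- r) c k * pol_mean pi (q k) s.
Proof. exact: sumr_mul_sumC. Qed.

Lemma Ppi_sum pi (I : Type) (r : seq I) (c : I -> R) (q : I -> S -> A -> R) s a :
  Ppi pi (fun s a => \sum_(k <- r) c k * q k s a) s a =
  \sum_(k <- r) c k * Ppi pi (q k) s a.
Proof. by rewrite /Ppi; under eq_bigr do rewrite pol_mean_sum; exact: sumr_mul_sumC. Qed.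

Lemma PpiB pi q1 q2 s a :
  Ppi pi (fun s a => q1 s a - q2 s a) s a = Ppi pi q1 s a - Ppi pi q2 s a.
Proof.
rewrite /Ppi /pol_mean -sumrB; apply: eq_bigr => s2 _; rewrite -mulrBr -sumrB.
by congr (_ * _); apply: eq_bigr => a2 _; rewrite mulrBr.
Qed.

Definition det_pol (d : S -> A) : S -> A -> R := fun s a => (a == d s)%:R.

Lemma pol_mean_det d q s : pol_mean (det_pol d) q s = q s (d s).
Proof.
rewrite /pol_mean /det_pol (bigD1 (d s)) //= eqxx mul1r big1 ?addr0 //.
by move=> a /negbTE ->; rewrite mul0r.
Qed.

Lemma det_pol_policy d : is_policy (det_pol d).
Proof.
move=> s; split=> [a|]; first by rewrite /det_pol ler0n.
by have := pol_mean_det d (fun _ _ => 1) s; rewrite /pol_mean; under eq_bigr do rewrite mulr1.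
Qed.

Lemma pol_mean_le_greedy pi q d : is_policy pi ->
  (forall s a, q s a <= q s (d s)) -> forall s, pol_mean pi q s <= q s (d s).
Proof.
move=> pi_pol greedy s; rewrite -[leRHS]mul1r -(pi_pol s).2 big_distrl.
by apply: ler_sum => a _; rewrite ler_wpM2l //; exact: (pi_pol s).1.
Qed.

Hypothesis tau_dist : forall s a, is_dist (tau s a).

Lemma Ppi_cst pi (c : R) : is_policy pi -> forall s a, Ppi pi (fun _ _ => c) s a = c.
Proof.
move=> pi_pol s a; rewrite /Ppi /pol_mean.
under eq_bigr do rewrite -big_distrl /= (pi_pol _).2 mul1r.
by rewrite -big_distrl /= (tau_dist s a).2 mul1r.
Qed.

Lemma Ppi_le pi q1 q2 : is_policy pi -> (forall s a, q1 s a <= q2 s a) ->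
  forall s a, Ppi pi q1 s a <= Ppi pi q2 s a.
Proof.
move=> pi_pol le_q s a; apply: ler_sum => s2 _; rewrite ler_wpM2l //.
  exact: (tau_dist s a).1.
by apply: ler_sum => a2 _; rewrite ler_wpM2l //; exact: (pi_pol s2).1.
Qed.

Lemma Ppi_le_pol pi pi' q : (forall s, pol_mean pi q s <= pol_mean pi' q s) ->
  forall s a, Ppi pi q s a <= Ppi pi' q s a.
Proof.
by move=> le_pi s a; apply: ler_sum => s2 _; rewrite ler_wpM2l //; exact: (tau_dist s a).1.
Qed.

Lemma Ppi_norm_le pi q B : is_policy pi -> (forall s a, `|q s a| <= B) ->
  forall s a, `|Ppi pi q s a| <= B.
Proof.
move=> pi_pol q_le s a.
have [q_ge q_le'] : (forall s a, - B <= q s a) /\ (forall s a, q s a <= B).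
  by split=> s1 a1; have := q_le s1 a1; rewrite ler_norml => /andP[].
rewrite ler_norml; apply/andP; split.
  by rewrite -[leLHS](Ppi_cst _ pi_pol s a); exact: Ppi_le.
by rewrite -[leRHS](Ppi_cst _ pi_pol s a); exact: Ppi_le.
Qed.

Lemma Ppi_cvg pi (u : nat -> S -> A -> R) (l : S -> A -> R) :
  (forall s a, u n s a @[n --> \oo] --> l s a) ->
  forall s a, Ppi pi (u n) s a @[n --> \oo] --> Ppi pi l s a.
Proof.
move=> u_l s a; apply: cvg_big => [|s2 _]; first exact: add_continuous.
apply: cvgM; first exact: cvg_cst.
apply: cvg_big => [|a2 _]; first exact: add_continuous.
by apply: cvgM; first exact: cvg_cst.
Qed.

End TransitionOperator.

Arguments det_pol {R S A} d s a.
Arguments det_pol_policy {R S A} d.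

Section DiscountedQfunction.
Variables (R : realType) (S A : finType) (tau : S -> A -> S -> R) (gamma : R).
Hypotheses (tau_dist : forall s a, is_dist (tau s a))
  (gamma_ge0 : 0 <= gamma) (gamma_lt1 : gamma < 1).
Implicit Types (pi : S -> A -> R) (f : S -> A -> R).

Local Notation Ppi := (Ppi tau).
Local Notation mean_reward := (mean_reward tau).

Definition qfun pi f : S -> A -> R :=
  fun s a => limn (series (fun t => gamma ^+ t * iter t (Ppi pi) f s a)).

Lemma Qpi_qfun pi r : Qpi tau gamma pi r = qfun pi (mean_reward r).
Proof.
apply/funext=> s; apply/funext=> a; congr (limn (series _)).
by apply/funext=> t; rewrite exp_reward_iter.
Qed.

Lemma qfun_cvg pi f s a : is_policy pi ->
  series (fun t => gamma ^+ t * iter t (Ppi pi) f s a) @ \oo --> qfun pi f s a.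
Proof.
move=> pi_pol; pose B := \sum_s1 \sum_a1 `|f s1 a1|.
have f_le s1 a1 : `|f s1 a1| <= B.
  rewrite /B (bigD1 s1) //= (bigD1 a1) //= -addrA lerDl.
  by rewrite addr_ge0 ?sumr_ge0 // => *; rewrite sumr_ge0.
have iter_le t s1 a1 : `|iter t (Ppi pi) f s1 a1| <= B.
  by elim: t s1 a1 => [//|t IHt] s1 a1 /=; exact: Ppi_norm_le.
have B_ge0 : 0 <= B := le_trans (normr_ge0 _) (f_le s a).
apply: normed_cvg; apply: (@series_le_cvg _ _ (geometric B gamma)).
- by move=> n; rewrite normr_ge0.
- by move=> n; rewrite geometric_ge0.
- move=> n /=; rewrite normrM normrX ger0_norm // mulrC.
  by rewrite ler_wpM2r ?exprn_ge0.
- by apply: is_cvg_geometric_series; rewrite ger0_norm.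
Qed.

Lemma qfun_Bellman pi f : is_policy pi ->
  forall s a, qfun pi f s a = f s a + gamma * Ppi pi (qfun pi f) s a.
Proof.
move=> pi_pol s a.
pose Sn n s a := series (fun t => gamma ^+ t * iter t (Ppi pi) f s a) n.
have SnS n : Sn n.+1 s a = f s a + gamma * Ppi pi (Sn n) s a.
  rewrite /Sn /series /= big_nat_recl // expr0 mul1r Ppi_sum big_distrr /=.
  by congr (_ + _); apply: eq_bigr => t _; rewrite exprS -mulrA.
have Sn_lim : Sn n.+1 s a @[n --> \oo] --> qfun pi f s a.
  by rewrite (cvg_shiftS (fun n => Sn n s a)); exact: qfun_cvg.
suff : Sn n.+1 s a @[n --> \oo] --> f s a + gamma * Ppi pi (qfun pi f) s a.
  exact: cvg_unique Sn_lim.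
under eq_cvg do rewrite SnS.
apply: cvgD; first exact: cvg_cst.
apply: cvgM; first exact: cvg_cst.
by apply: Ppi_cvg => s1 a1; exact: qfun_cvg.
Qed.

Lemma qfun_inj pi f g : is_policy pi -> qfun pi f = qfun pi g -> f = g.
Proof.
move=> pi_pol qfg; apply/funext=> s; apply/funext=> a.
apply: (addIr (gamma * Ppi pi (qfun pi g) s a)).
by rewrite -{1}qfg -!qfun_Bellman // qfg.
Qed.

Lemma le0_of_le_discounted pi x : is_policy pi ->
  (forall s a, x s a <= gamma * Ppi pi x s a) -> forall s a, x s a <= 0.
Proof.
move=> pi_pol x_le s a.
(* At a maximiser of x, P^pi x <= max x, hence max x <= gamma max x. *)
have [[s0 a0] _ x_max] := @arg_maxP _ _ (S * A)%type (s, a) xpredT (fun p => x p.1 p.2) isT.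
have x_le_max s1 a1 : x s1 a1 <= x s0 a0 by exact: (x_max (s1, a1)).
have Ppi_le_max : Ppi pi x s0 a0 <= x s0 a0.
  by rewrite -[leRHS](Ppi_cst tau_dist _ pi_pol s0 a0); exact: Ppi_le.
have : x s0 a0 <= gamma * x s0 a0 := le_trans (x_le s0 a0) (ler_wpM2l gamma_ge0 Ppi_le_max).
by move=> le_gamma; apply: le_trans (x_le_max s a) _; have := gamma_lt1; nra.
Qed.

Lemma qfun_le pi pi' pi0 f : is_policy pi -> is_policy pi' -> is_policy pi0 ->
  (forall s a, Ppi pi (qfun pi f) s a - Ppi pi' (qfun pi' f) s a <=
               Ppi pi0 (qfun pi f) s a - Ppi pi0 (qfun pi' f) s a) ->
  forall s a, qfun pi f s a <= qfun pi' f s a.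
Proof.
move=> pi_pol pi'_pol pi0_pol le_next s a; rewrite -subr_le0.
pose x s a := qfun pi f s a - qfun pi' f s a.
apply: (le0_of_le_discounted (x := x) pi0_pol) => s1 a1.
rewrite /x PpiB {1}(qfun_Bellman _ pi_pol) {1}(qfun_Bellman _ pi'_pol).
by rewrite opprD addrACA subrr add0r -mulrBr ler_wpM2l.
Qed.

Lemma qfun_le_pol_mean pi pi' f : is_policy pi -> is_policy pi' ->
  (forall s, pol_mean pi (qfun pi' f) s <= pol_mean pi' (qfun pi' f) s) ->
  forall s a, qfun pi f s a <= qfun pi' f s a.
Proof.
move=> pi_pol pi'_pol le_mean; apply: (qfun_le pi_pol pi'_pol pi_pol) => s a.
by rewrite lerD2l lerN2; exact: Ppi_le_pol.
Qed.

Lemma qfun_improvement pi pi' f : is_policy pi -> is_policy pi' ->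
  (forall s, pol_mean pi (qfun pi f) s <= pol_mean pi' (qfun pi f) s) ->
  forall s a, qfun pi f s a <= qfun pi' f s a.
Proof.
move=> pi_pol pi'_pol le_mean; apply: (qfun_le pi_pol pi'_pol pi'_pol) => s a.
by rewrite lerD2r; exact: Ppi_le_pol.
Qed.

Lemma exists_optimal_det_pol f (a0 : A) : exists d : S -> A,
  (forall s a, qfun (det_pol d) f s a <= qfun (det_pol d) f s (d s)) /\
  (forall pi, is_policy pi -> forall s a, qfun pi f s a <= qfun (det_pol d) f s a).
Proof.
pose total (d : {ffun S -> A}) := \sum_s qfun (det_pol d) f s (d s).
have [d _ d_max] := @arg_maxP _ _ {ffun S -> A} [ffun=> a0] xpredT total isT.
have d_greedy s a : qfun (det_pol d) f s a <= qfun (det_pol d) f s (d s).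
  rewrite leNgt; apply/negP => lt_a.
  pose Q := qfun (det_pol d) f.
  pose d' : {ffun S -> A} := [ffun s => [arg max_(a > d s) Q s a]%O].
  have d'_greedy s1 a1 : Q s1 a1 <= Q s1 (d' s1).
    by rewrite ffunE; case: arg_maxP => //= a2 _; apply.
  have Q_le : forall s a, Q s a <= qfun (det_pol d') f s a.
    apply: (qfun_improvement (det_pol_policy d) (det_pol_policy d')) => s1.
    by rewrite !pol_mean_det; exact: d'_greedy.
  have : total d < total d'.
    rewrite /total (bigD1 s) //= [ltRHS](bigD1 s) //=; apply: ltr_leD.
      exact: lt_le_trans lt_a (le_trans (d'_greedy s a) (Q_le _ _)).
    by apply: ler_sum => s1 _; exact: le_trans (d'_greedy s1 (d s1)) (Q_le _ _).
  by rewrite ltNge => /negP; apply; exact: d_max.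
exists d; split=> // pi pi_pol.
apply: qfun_le_pol_mean => //; first exact: det_pol_policy.
by move=> s; rewrite pol_mean_det; exact: pol_mean_le_greedy.
Qed.

Lemma Qstar_det_pol r d :
  (forall pi, is_policy pi ->
     forall s a, qfun pi (mean_reward r) s a <= qfun (det_pol d) (mean_reward r) s a) ->
  Qstar tau gamma r = qfun (det_pol d) (mean_reward r).
Proof.
move=> d_opt; apply/funext=> s; apply/funext=> a; rewrite /Qstar.
set E := [set q | _]; set Qd := qfun _ _ s a.
have E_Qd : E Qd by exists (det_pol d); rewrite Qpi_qfun; split=> //; exact: det_pol_policy.
have Qd_ub : ubound E Qd by move=> _ [pi [pi_pol ->]]; rewrite Qpi_qfun; exact: d_opt.
apply/le_anti/andP; split; first by apply: ge_sup => //; exists Qd.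
by apply: sup_upper_bound => //; split; exists Qd.
Qed.

Lemma Qstar_Bellman r (a0 : A) : exists d : S -> A,
  (forall s a, Qstar tau gamma r s a <= Qstar tau gamma r s (d s)) /\
  (forall s a, Qstar tau gamma r s a =
     mean_reward r s a + gamma * Ppi (det_pol d) (Qstar tau gamma r) s a).
Proof.
have [d [d_greedy d_opt]] := exists_optimal_det_pol (mean_reward r) a0.
exists d; rewrite (Qstar_det_pol d_opt); split=> //.
exact: qfun_Bellman _ (det_pol_policy d).
Qed.

Lemma Qstar_mean_reward r r' :
  mean_reward r = mean_reward r' -> Qstar tau gamma r = Qstar tau gamma r'.
Proof.
move=> e; apply/funext=> s; apply/funext=> a; congr sup; apply/funext=> q.
by apply/propext; split=> -[pi [pi_pol ->]]; exists pi; rewrite !Qpi_qfun e.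
Qed.

Lemma Qstar_inj r r' :
  Qstar tau gamma r = Qstar tau gamma r' -> mean_reward r = mean_reward r'.
Proof.
move=> Qrr'; apply/funext=> s; apply/funext=> a.
have [d [d_greedy d_Bellman]] := Qstar_Bellman r a.
have [d' [d'_greedy d'_Bellman]] := Qstar_Bellman r' a.
rewrite Qrr' in d_greedy d_Bellman.
set Q := Qstar tau gamma r' in d_greedy d_Bellman d'_greedy d'_Bellman.
have same_next : Ppi (det_pol d) Q s a = Ppi (det_pol d') Q s a.
  apply: eq_bigr => s2 _; rewrite !pol_mean_det; congr (_ * _).
  by apply/le_anti; rewrite d_greedy d'_greedy.
apply: (addIr (gamma * Ppi (det_pol d) Q s a)).
by rewrite -d_Bellman same_next -d'_Bellman.
Qed.

End DiscountedQfunction.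

Theorem theorem3p1 (R : realType) (S A : finType)
    (tau : S -> A -> S -> R) (mu0 : S -> R) (gamma : R)
    (htau : forall s a, is_dist (tau s a)) (hmu0 : is_dist mu0)
    (hgamma : 0 < gamma < 1)
    (r r' : S -> A -> S -> R) :
  (forall pi : S -> A -> R, is_policy pi ->
     (Qpi tau gamma pi r = Qpi tau gamma pi r' <-> S'_redistribution tau r r'))
  /\
  (Qstar tau gamma r = Qstar tau gamma r' <-> S'_redistribution tau r r').
Proof.
have [gamma_gt0 gamma_lt1] := andP hgamma.
have gamma_ge0 := ltW gamma_gt0.
split=> [pi pi_pol|]; rewrite S'_redistributionE.
  by rewrite !Qpi_qfun; split=> [|->//]; exact: qfun_inj.
split; [exact: Qstar_inj | exact: Qstar_mean_reward].
Qed.
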